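(* Consider the multi-market oligopoly of equal capacity $\mathcal{G}$ described in the context, and suppose the functions $u_x$ ($x\in E$) and $c$ satisfy: each $u_x$ is concave and differentiable; $c$ is convex and differentiable; and at least one of the following holds: (a) all but at most one of the $u_x$ are strictly concave, or (b) $c$ is strictly convex. Then for every player $i\in N$ and every opponent aggregate $\mathbf{s}_{-i}\in S_{-i}=(n-1)\Delta^{m-1}$, the payoff $\mathbf{s}_i\mapsto u_i(\mathbf{s}_i;\mathbf{s}_{-i})$ is strictly concave on $\Delta^{m-1}$.
   Context: Let $N=\{1,\dots,n\}$ be a set of firms (players) and $E=\{1,\dots,m\}$ a set of markets. Let $\Delta^{m-1}=\{\mathbf{v}\in\mathbb{R}^m:\mathbf{v}\ge 0,\ \mathbf{v}^{T}\mathbf{1}=1\}$. Each firm $i$ chooses a strategy $\mathbf{s}_i=(s_{ix})_{x=1}^m\in S_i=\Delta^{m-1}$ (it allocates one unit of resource across markets). For each market $x$ let $u_x:\mathbb{R}_{\ge 0}\to\mathbb{R}_{\ge 0}$ with $u_x(0)=0$ (total revenue in market $x$), and let $p_x(t)=u_x(t)/t$ for $t>0$. Let $c:\Delta^{m-1}\to\mathbb{R}_{\ge 0}$ be a common cost function. For a strategy profile $\mathbf{S}=(\mathbf{s}_i)_{i=1}^n$ put $s_x=\sum_{i=1}^n s_{ix}$, $\mathbf{s}_{-i}=\sum_{j\ne i}\mathbf{s}_j$ (so $s_x=s_{ix}+s_{-ix}$). The payoff of player $i$ is $u_i(\mathbf{s}_i;\mathbf{s}_{-i})=\sum_{x=1}^m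 p_x(s_x)s_{ix}-c(\mathbf{s}_i)$ (a term with $s_x=0$ is taken to be $0$). The game is $\mathcal{G}=(N,S,(u_i)_{i=1}^n)$ with $S=\prod_{i=1}^n \Delta^{m-1}$. *)

From HB Require Import structures.
From mathcomp Require Import all_boot all_order all_algebra.
From mathcomp Require Import all_classical all_reals all_analysis.
Set Implicit Arguments. Unset Strict Implicit. Unset Printing Implicit Defensive.
Import Order.TTheory GRing.Theory Num.Theory.
Import numFieldNormedType.Exports.
Local Open Scope ring_scope.

Definition scaled_simplex (R : realType) (m : nat) (k : R) (v : 'rV[R]_m) : Prop :=
  (forall x : 'I_m, 0 <= v ord0 x) /\ \sum_(x < m) v ord0 x = k.

Definition simplex (R : realType) (m : nat) (v : 'rV[R]_m) : Prop :=
  scaled_simplex 1 v.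

Definition concave_on (R : realType) (V : lmodType R) (A : V -> Prop) (f : V -> R) :=
  forall x y t, A x -> A y -> 0 <= t -> t <= 1 ->
    t * f x + (1 - t) * f y <= f (t *: x + (1 - t) *: y).

Definition strictly_concave_on (R : realType) (V : lmodType R) (A : V -> Prop) (f : V -> R) :=
  forall x y t, A x -> A y -> x != y -> 0 < t -> t < 1 ->
    t * f x + (1 - t) * f y < f (t *: x + (1 - t) *: y).

Definition convex_on (R : realType) (V : lmodType R) (A : V -> Prop) (f : V -> R) :=
  concave_on A (fun v => - f v).

Definition strictly_convex_on (R : realType) (V : lmodType R) (A : V -> Prop) (f : V -> R) :=
  strictly_concave_on A (fun v => - f v).

Definition price (R : realType) (u : R -> R) (t : R) : R := u t / t.

(* u_i(s_i; s_{-i}) = sum_x p_x(s_x) s_{ix} - c(s_i), with s_x = s_{ix} + s_{-ix};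
   a term with s_x = 0 is taken to be 0. *)
Definition payoff (R : realType) (m : nat) (u : 'I_m -> R -> R)
    (c : 'rV[R]_m -> R) (si smi : 'rV[R]_m) : R :=
  \sum_(x < m)
     (if si ord0 x + smi ord0 x == 0 then 0
      else price (u x) (si ord0 x + smi ord0 x) * si ord0 x)
  - c si.

From HB Require Import structures.
From mathcomp Require Import all_boot all_order all_algebra.
From mathcomp Require Import all_classical all_reals all_analysis.
From mathcomp Require Import ring.
Import Order.TTheory GRing.Theory Num.Theory.
Import numFieldNormedType.Exports.
Local Open Scope ring_scope.

(* In a market with total revenue u (concave, u 0 = 0), a firm supplying a
   against rivals supplying b earns a / (a + b) * u (a + b). Along a segment
   from a1 to a2 with weights l, 1 - l, the concavity gap of this revenue is
   the market share times the concavity gap of u at the aggregates x = a1 + b,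
   y = a2 + b, plus l (1 - l) b / (a + b) * (y - x) * (u x / x - u y / y).
   The last term is nonnegative because the price u t / t is antitone, so each
   market term is concave, strictly so when u is strictly concave and a1 <> a2.
   Two distinct points of the simplex differ in at least two coordinates, so
   under (a) some differing market has a strictly concave u; under (b) the
   strictness comes from the cost. *)

Set Implicit Arguments.
Unset Strict Implicit.
Unset Printing Implicit Defensive.

Section MarketShareRevenue.
Variables (R : realFieldType) (f : R -> R).
Hypothesis f_concave : forall x y t, 0 <= x -> 0 <= y -> 0 <= t -> t <= 1 ->
  t * f x + (1 - t) * f y <= f (t * x + (1 - t) * y).
Hypothesis f0 : f 0 = 0.

Lemma chord_slope_antitone s t : 0 < s -> s <= t -> f t / t <= f s / s.
Proof.
move=> s_gt0 le_st; have t_gt0 := lt_le_trans s_gt0 le_st.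
have st_ge0 : 0 <= s / t by rewrite divr_ge0 // ltW.
have st_le1 : s / t <= 1 by rewrite ler_pdivrMr // mul1r.
have := f_concave (ltW t_gt0) (lexx 0) st_ge0 st_le1.
rewrite f0 !mulr0 !addr0 divfK ?gt_eqF // => le_f.
by rewrite ler_pdivlMr // mulrC mulrA mulrAC.
Qed.

Lemma chord_slope_gap_ge0 s t : 0 < s -> 0 < t -> 0 <= (t - s) * (f s / s - f t / t).
Proof.
move=> s_gt0 t_gt0; have [le_st|/ltW le_ts] := leP s t.
  by rewrite mulr_ge0 // subr_ge0 // chord_slope_antitone.
by rewrite mulr_le0 // subr_le0 // chord_slope_antitone.
Qed.

(* The summand of [payoff] for one market, where the firm supplies [a] and its
   rivals [b]; in [revenueE] the case [a + b = 0] is covered by [0 / 0 = 0]. *)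
Definition revenue b a := if a + b == 0 then 0 else f (a + b) / (a + b) * a.

Lemma revenueE b a : revenue b a = a / (a + b) * f (a + b).
Proof.
rewrite /revenue; case: eqP => [->|_]; first by rewrite invr0 mulr0 mul0r.
by rewrite mulrAC [RHS]mulrC mulrA.
Qed.

Lemma revenue0 a : 0 <= a -> revenue 0 a = f a.
Proof.
move=> a_ge0; rewrite revenueE addr0.
have [->|a_neq0] := eqVneq a 0; first by rewrite f0 mulr0.
by rewrite divff ?mul1r.
Qed.

Lemma revenue_concavity_gap b a1 a2 l :
  0 <= b -> 0 <= a1 -> 0 <= a2 -> 0 <= l -> l <= 1 ->
  (l * a1 + (1 - l) * a2) / (l * a1 + (1 - l) * a2 + b) *
    (f (l * (a1 + b) + (1 - l) * (a2 + b))
     - (l * f (a1 + b) + (1 - l) * f (a2 + b)))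
  <= revenue b (l * a1 + (1 - l) * a2)
     - (l * revenue b a1 + (1 - l) * revenue b a2).
Proof.
move=> b_ge0 a1_ge0 a2_ge0 l_ge0 l_le1.
have f_gap_ge0 :=
  f_concave (addr_ge0 a1_ge0 b_ge0) (addr_ge0 a2_ge0 b_ge0) l_ge0 l_le1.
set a := l * a1 + (1 - l) * a2.
have a_ge0 : 0 <= a by rewrite addr_ge0 ?mulr_ge0 ?subr_ge0.
have -> : l * (a1 + b) + (1 - l) * (a2 + b) = a + b by rewrite /a; ring.
have [b0|b_neq0] := eqVneq b 0.
  rewrite b0 !addr0 in f_gap_ge0 *; rewrite !revenue0 // ler_piMl ?subr_ge0 //.
  by have [->|/divff ->] := eqVneq a 0; rewrite ?mul0r ?ler01.
have b_gt0 : 0 < b by rewrite lt0r b_neq0.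
have ab_gt0 : 0 < a + b by rewrite ltr_wpDl.
have a1b_gt0 : 0 < a1 + b by rewrite ltr_wpDl.
have a2b_gt0 : 0 < a2 + b by rewrite ltr_wpDl.
have -> : revenue b a - (l * revenue b a1 + (1 - l) * revenue b a2) =
    a / (a + b) * (f (a + b) - (l * f (a1 + b) + (1 - l) * f (a2 + b)))
    + l * (1 - l) * b / (a + b) *
      (((a2 + b) - (a1 + b)) * (f (a1 + b) / (a1 + b) - f (a2 + b) / (a2 + b))).
  rewrite !revenueE /a; field.
  by rewrite !gt_eqF // -/a.
rewrite lerDl mulr_ge0 ?chord_slope_gap_ge0 //.
by rewrite divr_ge0 ?mulr_ge0 ?subr_ge0 // ltW.
Qed.

Lemma revenue_concave b a1 a2 l :
  0 <= b -> 0 <= a1 -> 0 <= a2 -> 0 <= l -> l <= 1 ->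
  l * revenue b a1 + (1 - l) * revenue b a2 <= revenue b (l * a1 + (1 - l) * a2).
Proof.
move=> b_ge0 a1_ge0 a2_ge0 l_ge0 l_le1; rewrite -subr_ge0.
apply: le_trans _ (revenue_concavity_gap b_ge0 a1_ge0 a2_ge0 l_ge0 l_le1).
by rewrite mulr_ge0 ?divr_ge0 ?subr_ge0 ?f_concave ?addr_ge0 ?mulr_ge0 ?subr_ge0.
Qed.

Lemma revenue_strictly_concave :
  (forall x y t, 0 <= x -> 0 <= y -> x != y -> 0 < t -> t < 1 ->
     t * f x + (1 - t) * f y < f (t * x + (1 - t) * y)) ->
  forall b a1 a2 l, 0 <= b -> 0 <= a1 -> 0 <= a2 -> a1 != a2 -> 0 < l -> l < 1 ->
  l * revenue b a1 + (1 - l) * revenue b a2 < revenue b (l * a1 + (1 - l) * a2).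
Proof.
move=> f_strictly_concave b a1 a2 l b_ge0 a1_ge0 a2_ge0 a12_neq l_gt0 l_lt1.
rewrite -subr_gt0.
apply: lt_le_trans _ (revenue_concavity_gap b_ge0 a1_ge0 a2_ge0 (ltW l_gt0) (ltW l_lt1)).
have a_gt0 : 0 < l * a1 + (1 - l) * a2.
  rewrite lt0r addr_ge0 ?mulr_ge0 ?subr_ge0 ?(ltW l_gt0) ?(ltW l_lt1) // andbT.
  rewrite paddr_eq0 ?mulr_ge0 ?subr_ge0 ?(ltW l_gt0) ?(ltW l_lt1) //.
  rewrite !mulf_eq0 (gt_eqF l_gt0) subr_eq0 (gt_eqF l_lt1) /=.
  by apply: contra a12_neq => /andP[/eqP-> /eqP->].
rewrite mulr_gt0 ?divr_gt0 ?(ltr_wpDr b_ge0 a_gt0) //.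
by rewrite subr_gt0 f_strictly_concave ?addr_ge0 // (can_eq (addrK b)).
Qed.

End MarketShareRevenue.

Lemma ler_ltr_sum (R : numDomainType) (I : finType) (F G : I -> R) (k : I) :
  (forall i, F i <= G i) -> F k < G k -> \sum_i F i < \sum_i G i.
Proof.
move=> le_FG lt_FGk; rewrite (bigD1 k) //= [ltRHS](bigD1 k) //=.
by rewrite ltr_leD // ler_sum.
Qed.

Lemma two_coords_differ (R : zmodType) (m : nat) (v w : 'rV[R]_m) :
  \sum_k v ord0 k = \sum_k w ord0 k -> v != w ->
  exists j k, [/\ j != k, v ord0 j != w ord0 j & v ord0 k != w ord0 k].
Proof.
move=> sum_vw vw_neq.
have [j vw_j] : exists j, v ord0 j != w ord0 j.
  apply/existsP; apply: contraNT vw_neq => /existsPn vw_eq.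
  by apply/eqP/rowP => j; apply/eqP; rewrite -[_ == _]negbK.
suff [k /andP[jk_neq vw_k]] : exists k, (k != j) && (v ord0 k != w ord0 k).
  by exists j, k; rewrite eq_sym.
apply/existsP; apply: contraNT vw_j => /existsPn vw_eq; apply/eqP.
move: sum_vw; rewrite (bigD1 j) //= [RHS](bigD1 j) //=.
rewrite (eq_bigr (fun k => w ord0 k)) => [/addIr //|k kj_neq].
by apply/eqP; move: (vw_eq k); rewrite kj_neq negbK.
Qed.

Section ConcaveDifference.
Variables (R : realType) (V : lmodType R) (A : V -> Prop) (f g : V -> R).

Lemma concave_on_sub_strictly_convex :
  concave_on A f -> strictly_convex_on A g -> strictly_concave_on A (fun v => f v - g v).
Proof.
move=> f_concave g_convex x y t Ax Ay xy_neq t_gt0 t_lt1.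
have := f_concave x y t Ax Ay (ltW t_gt0) (ltW t_lt1).
have := g_convex x y t Ax Ay xy_neq t_gt0 t_lt1.
rewrite !mulrBr !mulrN => lt_g le_f.
by rewrite addrACA ler_ltD.
Qed.

Lemma strictly_concave_on_sub_convex :
  strictly_concave_on A f -> convex_on A g -> strictly_concave_on A (fun v => f v - g v).
Proof.
move=> f_concave g_convex x y t Ax Ay xy_neq t_gt0 t_lt1.
have := f_concave x y t Ax Ay xy_neq t_gt0 t_lt1.
have := g_convex x y t Ax Ay (ltW t_gt0) (ltW t_lt1).
rewrite !mulrBr !mulrN => le_g lt_f.
by rewrite addrACA ltr_leD.
Qed.

End ConcaveDifference.

Section TotalRevenue.
Variables (R : realType) (m : nat) (u : 'I_m -> R -> R) (smi : 'rV[R]_m).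
Hypothesis u_concave : forall x, concave_on (fun t : R^o => 0 <= t) (u x).
Hypothesis u0 : forall x, u x 0 = 0.
Hypothesis smi_ge0 : forall x, 0 <= smi ord0 x.

Definition total_revenue (si : 'rV[R]_m) :=
  \sum_x revenue (u x) (smi ord0 x) (si ord0 x).

Lemma total_revenue_concave : concave_on (@simplex R m) total_revenue.
Proof.
move=> x y l [x_ge0 _] [y_ge0 _] l_ge0 l_le1.
rewrite /total_revenue !mulr_sumr -big_split ler_sum // => k _.
by rewrite !mxE; apply: (revenue_concave (u_concave k) (u0 k)).
Qed.

Lemma total_revenue_strictly_concave :
  (forall x y, ~ strictly_concave_on (fun t : R^o => 0 <= t) (u x) ->
               ~ strictly_concave_on (fun t : R^o => 0 <= t) (u y) -> x = y) ->
  strictly_concave_on (@simplex R m) total_revenue.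
Proof.
move=> at_most_one_weak x y l [x_ge0 sum_x] [y_ge0 sum_y] xy_neq l_gt0 l_lt1.
have [j [k [jk_neq xy_j xy_k]]] := two_coords_differ (etrans sum_x (esym sum_y)) xy_neq.
have [k0 xy_k0 u_k0_strict] : exists2 k0, x ord0 k0 != y ord0 k0 &
    strictly_concave_on (fun t : R^o => 0 <= t) (u k0).
  have [u_j|u_j] := pselect (strictly_concave_on (fun t : R^o => 0 <= t) (u j)).
    by exists j.
  have [u_k|u_k] := pselect (strictly_concave_on (fun t : R^o => 0 <= t) (u k)).
    by exists k.
  by case/eqP: jk_neq; apply: at_most_one_weak.
rewrite /total_revenue !mulr_sumr -big_split.
apply: (ler_ltr_sum (k := k0)) => [i|]; rewrite !mxE.
  exact: (revenue_concave (u_concave i) (u0 i) (smi_ge0 i) (x_ge0 i) (y_ge0 i)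
                          (ltW l_gt0) (ltW l_lt1)).
exact: (revenue_strictly_concave (u_concave k0) (u0 k0) u_k0_strict).
Qed.

End TotalRevenue.

Theorem proposition1 (R : realType) (n m : nat)
  (u : 'I_m -> R -> R) (c : 'rV[R]_m -> R)
  (* u_x : R_{>=0} -> R_{>=0}, u_x(0) = 0 *)
  (hu0 : forall x, u x 0 = 0)
  (hupos : forall x t, 0 <= t -> 0 <= u x t)
  (* each u_x is concave and differentiable on R_{>=0} (one-sided at 0) *)
  (hucav : forall x, concave_on (fun t : R^o => 0 <= t) (u x))
  (hudiff : forall x t, 0 < t -> derivable (u x) t 1)
  (hudiff0 : forall x, cvg ((fun h : R => h^-1 * (u x h - u x 0)) @ at_right 0)%classic)
  (* c : Delta^{m-1} -> R_{>=0}, convex and differentiable *)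
  (hcpos : forall v, simplex v -> 0 <= c v)
  (hcvx : convex_on (@simplex R m) c)
  (hcdiff : forall v, simplex v -> differentiable c v)
  (* (a) all but at most one u_x strictly concave, or (b) c strictly convex *)
  (hstrict :
     (forall x y : 'I_m,
        ~ strictly_concave_on (fun t : R^o => 0 <= t) (u x) ->
        ~ strictly_concave_on (fun t : R^o => 0 <= t) (u y) -> x = y)
     \/ strictly_convex_on (@simplex R m) c) :
  forall (i : 'I_n) (smi : 'rV[R]_m),
    scaled_simplex (n.-1)%:R smi ->
    strictly_concave_on (@simplex R m) (fun si => payoff u c si smi).
Proof.
move=> _ smi [smi_ge0 _].
case: hstrict => [at_most_one_weak | c_strictly_convex].
  exact: strictly_concave_on_sub_convex
    (total_revenue_strictly_concave hucav hu0 smi_ge0 at_most_one_weak) hcvx.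
exact: concave_on_sub_strictly_convex
  (total_revenue_concave hucav hu0 smi_ge0) c_strictly_convex.
Qed.
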